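(* Let $\xi>2$ and define $$\varepsilon_{min}(\xi)=\begin{cases}\infty,&\xi\le3,\\ \sqrt{(1-\tfrac2\xi)(1+\tfrac{1}{\xi-3})},&3<\xi<4,\\ 1,&\xi\ge4,\end{cases}\qquad \lambda_{max}(\varepsilon,\xi)=\xi\sqrt{\frac{\varepsilon^2}{1-\frac2\xi}-1}.$$ Then the set of pairs $(\varepsilon,\lambda)$ with $\varepsilon>1$ belonging to case (II) at position $\xi$ is exactly the set of pairs with $\varepsilon>\varepsilon_{min}(\xi)$ and $\lambda_c(\varepsilon)<\lambda<\lambda_{max}(\varepsilon,\xi)$.
   Context: Dimensionless potential: $U_\lambda(\xi)=(1-\tfrac2\xi)(1+\tfrac{\lambda^2}{\xi^2})$. For $\lambda^2>12$, $U_\lambda$ on $(2,\infty)$ has a local maximum at $\xi_{max}(\lambda)=\tfrac{\lambda^2}{2}(1-\sqrt{1-12/\lambda^2})$. For $\varepsilon>1$, $\lambda_c(\varepsilon)$ is the value of $\lambda$ for which the maximum of $U_\lambda$ equals $\varepsilon^2$; explicitly $\lambda_c(\varepsilon)^2=12/(1-4\alpha-8\alpha^2+8\alpha\sqrt{\alpha^2+\alpha})$, $\alpha=\tfrac98\varepsilon^2-1$ (so $\lambda_c(\varepsilon)>4$ for $\varepsilon>1$). A pair $(\varepsilon,\lambda)$ with $\varepsilon>1$ belongs to case (II) (scattered particles incoming from infinity) at position $\xi$ if $\lambda>\lambda_c(\varepsilon)$, $\xi>\xi_{max}(\lambda)$ and $U_\lambda(\xi)<\varepsilon^2$. *)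

From Stdlib Require Import Reals.
From Coquelicot Require Import Rbar.
Open Scope R_scope.

Definition U (lam xi : R) : R := (1 - 2 / xi) * (1 + lam ^ 2 / xi ^ 2).

(* Location of the local maximum of U_lambda (for lambda^2 > 12) *)
Definition xi_max (lam : R) : R := lam ^ 2 / 2 * (1 - sqrt (1 - 12 / lam ^ 2)).

Definition alpha (eps : R) : R := 9 / 8 * eps ^ 2 - 1.

Definition lambda_c (eps : R) : R :=
  let a := alpha eps in
  sqrt (12 / (1 - 4 * a - 8 * a ^ 2 + 8 * a * sqrt (a ^ 2 + a))).

Definition case_II (eps lam xi : R) : Prop :=
  lambda_c eps < lam /\ xi_max lam < xi /\ U lam xi < eps ^ 2.

Definition eps_min (xi : R) : Rbar :=
  if Rle_dec xi 3 then p_infty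
  else if Rlt_dec xi 4 then Finite (sqrt ((1 - 2 / xi) * (1 + 1 / (xi - 3))))
  else Finite 1.

Definition lambda_max (eps xi : R) : R := xi * sqrt (eps ^ 2 / (1 - 2 / xi) - 1).

(** For [lambda > lambda_c(eps) > 4] the maximum [xi_max(lambda)] lies in [(3,4)], so
    [xi > xi_max(lambda)] is automatic for [xi >= 4], impossible for [xi <= 3], and for
    [3 < xi < 4] it says that [lambda^2] exceeds [peak_lam2 xi = xi^2/(xi-3)], the [lambda^2]
    for which the maximum of [U_lambda] sits exactly at [xi]; the height of that maximum is
    [peak_U xi = eps_min(xi)^2].  Parametrising [eps > 1] by the point [x] in [(3,4)] with
    [eps^2 = peak_U x], one has [lambda_c(eps)^2 = peak_lam2 x], and both [peak_U] and
    [peak_lam2] decrease on [(3,4)], so [eps > eps_min(xi)] iff [x < xi], which gives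
    [xi_max(lambda) < xi].  Finally [U_lambda(xi) < eps^2] is [lambda < lambda_max(eps,xi)]
    after solving for [lambda]. *)

From Stdlib Require Import Reals Lra Psatz.
From Coquelicot Require Import Rbar.
Open Scope R_scope.

Lemma lt_sqrt_iff (a b : R) : 0 <= a -> (a < sqrt b <-> a ^ 2 < b).
Proof.
  intros Ha; split; intros H.
  - apply sqrt_lt_0_alt; rewrite sqrt_pow2; assumption.
  - rewrite <- (sqrt_pow2 a) by assumption.
    apply sqrt_lt_1_alt; split; [apply pow2_ge_0 | assumption].
Qed.

Lemma sqrt_lt_iff (a b : R) : 0 <= a -> 0 <= b -> (sqrt b < a <-> b < a ^ 2).
Proof.
  intros Ha Hb; rewrite <- (sqrt_pow2 a) at 1 by assumption; split; intros H.
  - exact (sqrt_lt_0_alt _ _ H).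
  - apply sqrt_lt_1_alt; split; assumption.
Qed.

Definition peak_lam2 (xi : R) : R := xi ^ 2 / (xi - 3).

Definition peak_U (xi : R) : R := (1 - 2 / xi) * (1 + 1 / (xi - 3)).

Lemma peak_U_ge0 (xi : R) : 3 < xi -> 0 <= peak_U xi.
Proof.
  intros Hxi; unfold peak_U.
  replace ((1 - 2 / xi) * (1 + 1 / (xi - 3))) with ((xi - 2) ^ 2 / (xi * (xi - 3)))
    by (field; lra).
  apply Rle_mult_inv_pos; nra.
Qed.

Lemma peak_U_antitone (x y : R) : 3 < x -> x <= y <= 4 -> peak_U y <= peak_U x.
Proof.
  intros Hx Hxy; unfold peak_U.
  apply Rmult_le_reg_r with (x * (x - 3) * (y * (y - 3)));
    [repeat apply Rmult_lt_0_compat; lra|].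
  replace ((1 - 2 / y) * (1 + 1 / (y - 3)) * (x * (x - 3) * (y * (y - 3))))
    with ((y - 2) ^ 2 * (x * (x - 3))) by (field; lra).
  replace ((1 - 2 / x) * (1 + 1 / (x - 3)) * (x * (x - 3) * (y * (y - 3))))
    with ((x - 2) ^ 2 * (y * (y - 3))) by (field; lra).
  assert (Hdiff : (x - 2) ^ 2 * (y * (y - 3)) - (y - 2) ^ 2 * (x * (x - 3))
                  = (y - x) * (4 - (x - 4) * (y - 4))) by ring.
  assert (0 <= (y - x) * (4 - (x - 4) * (y - 4))) by (apply Rmult_le_pos; nra).
  lra.
Qed.

Lemma peak_lam2_antitone (x y : R) : 3 < x -> x <= y <= 6 -> peak_lam2 y <= peak_lam2 x.
Proof.
  intros Hx Hxy; unfold peak_lam2.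
  apply Rmult_le_reg_r with ((x - 3) * (y - 3)); [nra|].
  replace (y ^ 2 / (y - 3) * ((x - 3) * (y - 3))) with (y ^ 2 * (x - 3)) by (field; lra).
  replace (x ^ 2 / (x - 3) * ((x - 3) * (y - 3))) with (x ^ 2 * (y - 3)) by (field; lra).
  assert (Hdiff : x ^ 2 * (y - 3) - y ^ 2 * (x - 3) = (y - x) * (9 - (x - 3) * (y - 3)))
    by ring.
  assert (0 <= (y - x) * (9 - (x - 3) * (y - 3))) by (apply Rmult_le_pos; nra).
  lra.
Qed.

Lemma sixteen_lt_peak_lam2 (x : R) : 3 < x < 4 -> 16 < peak_lam2 x.
Proof.
  intros Hx; unfold peak_lam2.
  apply Rmult_lt_reg_r with (x - 3); [lra|].
  replace (x ^ 2 / (x - 3) * (x - 3)) with (x ^ 2) by (field; lra).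
  nra.
Qed.

Lemma peak_U_lt_U (lam xi : R) : 3 < xi -> peak_lam2 xi < lam ^ 2 -> peak_U xi < U lam xi.
Proof.
  intros Hxi Hlam; unfold peak_U, U, peak_lam2 in *.
  apply Rmult_lt_compat_l.
  - assert (2 / xi < 1) by (apply Rmult_lt_reg_r with xi; field_simplify; lra). lra.
  - apply Rplus_lt_compat_l.
    apply Rmult_lt_reg_r with (xi ^ 2); [nra|].
    replace (1 / (xi - 3) * xi ^ 2) with (xi ^ 2 / (xi - 3)) by (field; lra).
    replace (lam ^ 2 / xi ^ 2 * xi ^ 2) with (lam ^ 2) by (field; lra).
    assumption.
Qed.

Lemma U_lt_iff_lt_lambda_max (eps lam xi : R) :
  2 < xi -> 0 <= lam -> (U lam xi < eps ^ 2 <-> lam < lambda_max eps xi).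
Proof.
  intros Hxi Hlam; unfold U, lambda_max.
  assert (Hc : 0 < 1 - 2 / xi)
    by (assert (2 / xi < 1) by (apply Rmult_lt_reg_r with xi; field_simplify; lra); lra).
  assert (Hscale : lam < xi * sqrt (eps ^ 2 / (1 - 2 / xi) - 1)
                   <-> lam / xi < sqrt (eps ^ 2 / (1 - 2 / xi) - 1)).
  { split; intros H.
    - apply Rmult_lt_reg_l with xi; [lra|].
      replace (xi * (lam / xi)) with lam by (field; lra). assumption.
    - replace lam with (xi * (lam / xi)) by (field; lra).
      apply Rmult_lt_compat_l; [lra | assumption]. }
  rewrite Hscale, lt_sqrt_iff by (apply Rle_mult_inv_pos; lra).
  replace (lam ^ 2 / xi ^ 2) with ((lam / xi) ^ 2) by (field; lra).
  split; intros H.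
  - apply Rmult_lt_reg_l with (1 - 2 / xi); [assumption|].
    replace ((1 - 2 / xi) * (eps ^ 2 / (1 - 2 / xi) - 1)) with (eps ^ 2 - (1 - 2 / xi))
      by (field; lra).
    lra.
  - apply Rmult_lt_compat_l with (r := 1 - 2 / xi) in H; [|assumption].
    replace ((1 - 2 / xi) * (eps ^ 2 / (1 - 2 / xi) - 1)) with (eps ^ 2 - (1 - 2 / xi))
      in H by (field; lra).
    lra.
Qed.

Section XiMax.

Variable lam : R.
Hypothesis Hlam : 12 < lam ^ 2.

Let s := sqrt (1 - 12 / lam ^ 2).

Lemma sqrt_disc_sq : s * s = 1 - 12 / lam ^ 2.
Proof.
  apply sqrt_sqrt.
  assert (12 / lam ^ 2 < 1); [|lra].
  apply Rmult_lt_reg_r with (lam ^ 2); [lra|].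
  replace (12 / lam ^ 2 * lam ^ 2) with 12 by (field; nra). lra.
Qed.

Lemma sqrt_disc_range : 0 <= s < 1.
Proof.
  pose proof sqrt_disc_sq as Hss.
  assert (0 < 12 / lam ^ 2) by (apply Rdiv_lt_0_compat; lra).
  split; [apply sqrt_pos | nra].
Qed.

(* Product of the roots [xi_max lam] and [lam^2/2 * (1 + s)] of [xi^2 - lam^2 xi + 3 lam^2]. *)
Lemma xi_max_mul : xi_max lam * (1 + s) = 6.
Proof.
  unfold xi_max; fold s.
  replace (lam ^ 2 / 2 * (1 - s) * (1 + s)) with (lam ^ 2 / 2 * (1 - s * s)) by ring.
  rewrite sqrt_disc_sq; field; nra.
Qed.

Lemma three_lt_xi_max : 3 < xi_max lam.
Proof. pose proof xi_max_mul; pose proof sqrt_disc_range; nra. Qed.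

Lemma xi_max_lt_iff (xi : R) : 3 < xi <= 6 -> (xi_max lam < xi <-> peak_lam2 xi < lam ^ 2).
Proof.
  intros Hxi.
  pose proof xi_max_mul as Hmul; pose proof sqrt_disc_range as Hs; pose proof sqrt_disc_sq as Hss.
  assert (Hroot : xi_max lam < xi <-> 6 - xi < xi * s).
  { split; intros H.
    - assert (0 < (xi - xi_max lam) * (1 + s)) by (apply Rmult_lt_0_compat; lra). nra.
    - apply Rnot_le_lt; intros Hle.
      assert (0 <= (xi_max lam - xi) * (1 + s)) by (apply Rmult_le_pos; lra). nra. }
  assert (Hsq : 6 - xi < xi * s <-> (6 - xi) ^ 2 < (xi * s) ^ 2).
  { rewrite <- (sqrt_pow2 (xi * s)) at 1 by nra. apply lt_sqrt_iff; lra. }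
  assert (Hpeak : peak_lam2 xi < lam ^ 2 <-> xi ^ 2 < lam ^ 2 * (xi - 3)).
  { unfold peak_lam2; split; intros H.
    - apply Rmult_lt_compat_r with (r := xi - 3) in H; [|lra].
      replace (xi ^ 2 / (xi - 3) * (xi - 3)) with (xi ^ 2) in H by (field; lra). lra.
    - apply Rmult_lt_reg_r with (xi - 3); [lra|].
      replace (xi ^ 2 / (xi - 3) * (xi - 3)) with (xi ^ 2) by (field; lra). lra. }
  rewrite Hroot, Hsq, Hpeak.
  replace ((xi * s) ^ 2) with (xi ^ 2 * (s * s)) by ring.
  rewrite Hss.
  replace (xi ^ 2 * (1 - 12 / lam ^ 2)) with (xi ^ 2 - 12 * xi ^ 2 / lam ^ 2) by (field; nra).
  assert (Hdiv : 12 * xi ^ 2 / lam ^ 2 * lam ^ 2 = 12 * xi ^ 2) by (field; nra).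
  split; intros H.
  - assert (12 * xi ^ 2 / lam ^ 2 < 12 * (xi - 3)) by lra. nra.
  - assert (12 * xi ^ 2 / lam ^ 2 < 12 * (xi - 3)); [|lra].
    apply Rmult_lt_reg_r with (lam ^ 2); [lra|]. nra.
Qed.

Lemma xi_max_lt_4 : 16 < lam ^ 2 -> xi_max lam < 4.
Proof.
  intros H16.
  pose proof xi_max_mul; pose proof sqrt_disc_sq; pose proof sqrt_disc_range.
  assert (12 / lam ^ 2 < 3 / 4).
  { apply Rmult_lt_reg_r with (lam ^ 2); [lra|].
    replace (12 / lam ^ 2 * lam ^ 2) with 12 by (field; nra). lra. }
  assert (s > 1 / 2) by nra.
  nra.
Qed.

End XiMax.

Lemma peak_U_onto (e : R) : 1 < e -> exists x, 3 < x < 4 /\ e = peak_U x.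
Proof.
  intros He.
  set (D := sqrt (9 * e ^ 2 - 8 * e)).
  assert (HD2 : D * D = 9 * e ^ 2 - 8 * e) by (apply sqrt_sqrt; nra).
  assert (HD0 : 0 <= D) by apply sqrt_pos.
  (* the root in (3,4) of [(e - 1) x^2 - (3 e - 4) x - 4], i.e. of [e = peak_U x] *)
  set (x := (3 * e - 4 + D) / (2 * (e - 1))).
  assert (Hx : 2 * (e - 1) * x = 3 * e - 4 + D) by (unfold x; field; lra).
  assert (Hx3 : 3 < x) by (assert (D > 3 * e - 2) by nra; nra).
  assert (Hx4 : x < 4) by (assert (D < 5 * e - 4) by nra; nra).
  assert (Hq : (e - 1) * x ^ 2 - (3 * e - 4) * x - 4 = 0).
  { assert (E : (2 * (e - 1) * x - (3 * e - 4)) ^ 2 = D * D) by (rewrite Hx; ring).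
    rewrite HD2 in E.
    assert (H4 : 4 * (e - 1) * ((e - 1) * x ^ 2 - (3 * e - 4) * x - 4) = 0) by nra.
    apply Rmult_integral in H4; destruct H4; [lra | assumption]. }
  exists x; split; [lra|].
  unfold peak_U.
  apply Rmult_eq_reg_r with (x * (x - 3)); [|nra].
  field_simplify; nra.
Qed.

Lemma lambda_c_sq (eps x : R) :
  3 < x <= 6 -> eps ^ 2 = peak_U x -> lambda_c eps ^ 2 = peak_lam2 x.
Proof.
  intros Hx Heps.
  assert (Hpeak : peak_U x = (x - 2) ^ 2 / (x * (x - 3))) by (unfold peak_U; field; lra).
  assert (Halpha : alpha eps = 9 / 8 * ((x - 2) ^ 2 / (x * (x - 3))) - 1)
    by (unfold alpha; rewrite Heps, Hpeak; reflexivity).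
  set (r := 3 / 8 * (x - 2) * (6 - x) / (x * (x - 3))).
  assert (Hsqrt : sqrt (alpha eps ^ 2 + alpha eps) = r).
  { replace (alpha eps ^ 2 + alpha eps) with (r * r)
      by (rewrite Halpha; unfold r; field; lra).
    apply sqrt_square; unfold r; apply Rle_mult_inv_pos; nra. }
  assert (Hden : 1 - 4 * alpha eps - 8 * alpha eps ^ 2 + 8 * alpha eps * r
                 = 12 * (x - 3) / x ^ 2)
    by (rewrite Halpha; unfold r; field; lra).
  unfold lambda_c; cbv zeta; rewrite Hsqrt, Hden.
  rewrite <- Rsqr_pow2, Rsqr_sqrt.
  - unfold peak_lam2; field; lra.
  - apply Rle_mult_inv_pos; [lra|]. apply Rdiv_lt_0_compat; nra.
Qed.

Lemma eps_min_lt_iff (xi eps : R) : 1 < eps ->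
  (Rbar_lt (eps_min xi) (Finite eps) <-> 3 < xi /\ (xi < 4 -> peak_U xi < eps ^ 2)).
Proof.
  intros He; unfold eps_min.
  destruct (Rle_dec xi 3) as [H3 | H3]; simpl; [split; [contradiction | lra]|].
  destruct (Rlt_dec xi 4) as [H4 | H4]; simpl.
  - rewrite sqrt_lt_iff by (lra || apply (peak_U_ge0 xi); lra).
    unfold peak_U; split; [intros H; split; [lra | intros; exact H] | intros [_ H]; auto].
  - split; [intros; split; [lra | intros; contradiction] | intros; assumption].
Qed.

Theorem lemma4 (xi eps lam : R) :
  2 < xi -> 1 < eps ->
  (case_II eps lam xi <->
   (Rbar_lt (eps_min xi) (Finite eps) /\
    lambda_c eps < lam < lambda_max eps xi)).
Proof.
  intros Hxi He.
  destruct (peak_U_onto (eps ^ 2)) as (x & Hx & Heps); [nra|].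
  assert (Hlc : lambda_c eps ^ 2 = peak_lam2 x) by (apply lambda_c_sq; lra).
  assert (Hlc0 : 0 <= lambda_c eps) by apply sqrt_pos.
  assert (Hbig : lambda_c eps < lam -> peak_lam2 x < lam ^ 2 /\ 16 < lam ^ 2).
  { intros Hl; pose proof (sixteen_lt_peak_lam2 x Hx); split; nra. }
  rewrite eps_min_lt_iff by assumption; unfold case_II.
  split.
  - intros (Hl & Hmax & HU); destruct (Hbig Hl) as [_ H16].
    assert (H3 : 3 < xi) by (pose proof (three_lt_xi_max lam ltac:(lra)); lra).
    rewrite <- U_lt_iff_lt_lambda_max by lra.
    repeat split; try assumption.
    intros H4; apply Rlt_trans with (U lam xi); [|assumption].
    apply peak_U_lt_U; [assumption|]. apply (xi_max_lt_iff lam); lra.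
  - intros ((H3 & Hpeak) & Hl & Hmax); destruct (Hbig Hl) as [Hx2 H16].
    rewrite <- U_lt_iff_lt_lambda_max in Hmax by lra.
    repeat split; try assumption.
    destruct (Rlt_le_dec xi 4) as [H4 | H4]; [|pose proof (xi_max_lt_4 lam ltac:(lra) H16); lra].
    assert (Hxxi : x < xi).
    { apply Rnot_le_lt; intros Hle.
      pose proof (peak_U_antitone xi x H3 ltac:(lra)); specialize (Hpeak H4); lra. }
    apply (xi_max_lt_iff lam); [lra | lra|].
    pose proof (peak_lam2_antitone x xi ltac:(lra) ltac:(lra)); lra.
Qed.
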